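(* Fix a BS $j$ and, for each class $l\in\{1,\dots,L\}$, a measurable set $A_l$ of (nonatomic) class-$l$ mobiles associated with BS $j$, of mass $m_{lj}\ge 0$. (1) The power control subproblem of BS $j$ is feasible if and only if $\sum_{l=1}^L m_{lj}\gamma_l<1$. (2) If it is feasible, there exists a unique Pareto efficient power density $p$, given by $p(x)=\frac{\sigma^2}{h_{lj}}\,\frac{\gamma_l}{1-\sum_{l'=1}^L m_{l'j}\gamma_{l'}}$ for all $x\in A_l$, $l=1,\dots,L$.
   Context: Nonatomic uplink model: class-$l$ mobiles all have power gain $h_{lj}>0$ to BS $j$ and common target SINR density $\gamma_l>0$; receiver noise power is $\sigma^2>0$. Masses are measured by Lebesgue measure. A power density is a measurable function $p:\bigcup_l A_l\to(0,\infty)$ (integrable against the gains). The SINR density of $x\in A_l$ is $\frac{h_{lj}p(x)}{\sum_{l'}\int_{A_{l'}}h_{l'j}p(z)\,dz+\sigma^2}$. $p$ is feasible if the SINR density of every $x\in A_l$ is at least $\gamma_l$, for all $l$; the power control subproblem of BS $j$ is feasible if a feasible $p$ exists. A feasible $p$ is Pareto efficient if there is no feasible $q$ with $q\le p$ everywhere and $q<p$ on a set of positive measure. *)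

From HB Require Import structures.
From mathcomp Require Import all_boot all_order all_algebra.
From mathcomp Require Import all_classical all_reals all_analysis.
Set Implicit Arguments. Unset Strict Implicit. Unset Printing Implicit Defensive.
Import Order.TTheory GRing.Theory Num.Theory.
Local Open Scope classical_set_scope.
Local Open Scope ring_scope.

(* L classes indexed by 'I_L; A l = set of class-l mobiles of BS j;
   h l = h_{lj} (gain of class l to BS j); gamma l = target SINR density;
   sigma2 = noise power; mu = the measure of masses. *)
Section PowerControl.
Context {d : measure_display} {T : measurableType d} {R : realType}.
Variable mu : {measure set T -> \bar R}.
Variable L : nat.
Variables (A : 'I_L -> set T) (h gamma : 'I_L -> R) (sigma2 : R).

Definition mobiles : set T := \bigcup_(l in [set: 'I_L]) A l.

Definition interference (p : T -> R) : R :=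
  \sum_(l < L) h l * Rintegral mu (A l) p.

Definition sinr (l : 'I_L) (p : T -> R) (x : T) : R :=
  h l * p x / (interference p + sigma2).

Definition power_density (p : T -> R) : Prop :=
  [/\ measurable_fun mobiles p,
      (forall x, mobiles x -> 0 < p x) &
      (forall l, mu.-integrable (A l) (EFin \o p))].

Definition feasible (p : T -> R) : Prop :=
  power_density p /\ (forall l x, A l x -> gamma l <= sinr l p x).

Definition subproblem_feasible : Prop := exists p, feasible p.

Definition pareto_efficient (p : T -> R) : Prop :=
  feasible p /\
  ~ (exists q, [/\ feasible q,
                   (forall x, mobiles x -> q x <= p x) &
                   (0 < mu [set x | mobiles x /\ (q x < p x)%R])%E]).

End PowerControl.

From HB Require Import structures.
From mathcomp Require Import all_boot all_order all_algebra.
From mathcomp Require Import all_classical all_reals all_analysis.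
From mathcomp Require Import measurable_realfun ring lra.
Set Implicit Arguments. Unset Strict Implicit. Unset Printing Implicit Defensive.
Import Order.TTheory GRing.Theory Num.Theory.
Local Open Scope classical_set_scope.
Local Open Scope ring_scope.

(* Integrating the SINR constraint [gamma_l (I + sigma2) <= h_l p] over each
   class and summing gives [load (I + sigma2) <= I] for the interference [I] of
   any feasible [p], where [load = sum_l m_l gamma_l]; hence [load < 1], and
   [I + sigma2 >= sigma2 / (1 - load)], so every feasible density dominates
   the classwise constant [p*] that meets all constraints with equality.
   Being the least feasible density, [p*] is Pareto efficient, and any Pareto
   efficient [p >= p*] cannot exceed [p*] on a set of positive mass. *)

Lemma load_interference_bound (R : realFieldType) (load I s : R) :
  0 <= I -> 0 < s -> load * (I + s) <= I -> load < 1 /\ s / (1 - load) <= I + s.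
Proof.
move=> I_ge0 s_gt0 le_loadI.
have load_lt1 : load < 1 by rewrite ltNge; apply/negP => load_ge1; nra.
by split=> //; rewrite ler_pdivrMr ?subr_gt0 //; nra.
Qed.

Section PowerControl.
Context (d : measure_display) (T : measurableType d) (R : realType)
  (mu : {measure set T -> \bar R}) (L : nat)
  (A : 'I_L -> set T) (m h gamma : 'I_L -> R) (sigma2 : R).
Hypotheses (mA : forall l, measurable (A l))
  (muA : forall l, mu (A l) = (m l)%:E)
  (h_gt0 : forall l, 0 < h l) (gamma_gt0 : forall l, 0 < gamma l)
  (sigma2_gt0 : 0 < sigma2).

Definition load : R := \sum_(l < L) m l * gamma l.

Definition opt_power (l : 'I_L) : R := sigma2 / h l * (gamma l / (1 - load)).

Local Notation interf := (interference mu A h).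
Local Notation feas := (feasible mu A h gamma sigma2).

Lemma mobilesP x : mobiles A x <-> exists l, A l x.
Proof. by split=> [[l _ Ax]|[l Ax]]; exists l. Qed.

Lemma measurable_mobiles : measurable (mobiles A).
Proof. by apply: fin_bigcup_measurable => // l _; exact: mA. Qed.

Lemma measurable_fun_mobiles (p : T -> R) :
  (forall l, measurable_fun (A l) p) -> measurable_fun (mobiles A) p.
Proof.
move=> mp _ Y mY; rewrite /mobiles setI_bigcupl.
by apply: fin_bigcup_measurable => // l _; exact: mp.
Qed.

Lemma integrable_cst_class l (k : R) : mu.-integrable (A l) (EFin \o cst k).
Proof.
apply/integrableP; split.
  by rewrite (_ : EFin \o cst k = cst k%:E) //; exact: measurable_cst.
by rewrite (eq_integral (cst `|k|%:E)) // integral_cst // muA -EFinM ltry.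
Qed.

Lemma Rintegral_cst_class l (k : R) : Rintegral mu (A l) (cst k) = k * m l.
Proof. by rewrite Rintegral_cst // muA. Qed.

Lemma interference_ge0 p : power_density mu A p -> 0 <= interf p.
Proof.
move=> [_ p_gt0 _]; apply: sumr_ge0 => l _; apply: mulr_ge0; first exact: ltW.
by apply: Rintegral_ge0 => x Ax; rewrite ltW // p_gt0 //; apply/mobilesP; exists l.
Qed.

Lemma feasible_power_lb p l x : feas p -> A l x ->
  gamma l * (interf p + sigma2) / h l <= p x.
Proof.
move=> [pd p_sinr] Ax.
have I_gt0 : 0 < interf p + sigma2 := ltr_wpDl (interference_ge0 pd) sigma2_gt0.
have := p_sinr l x Ax; rewrite /sinr ler_pdivlMr // => le_gp.
by rewrite ler_pdivrMr // [p x * _]mulrC.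
Qed.

Lemma feasible_load_interference p : feas p ->
  load * (interf p + sigma2) <= interf p.
Proof.
move=> fp; have [[_ _ p_int] _] := fp.
rewrite /load mulr_suml; apply: ler_sum => l _.
have := le_Rintegral (mA l) (integrable_cst_class l _) (p_int l)
  (fun x => feasible_power_lb fp).
rewrite Rintegral_cst_class => le_int.
have -> : m l * gamma l * (interf p + sigma2) =
          h l * (gamma l * (interf p + sigma2) / h l * m l).
  by field; rewrite gt_eqF.
by rewrite ler_wpM2l // ltW.
Qed.

Lemma feasible_load_lt1 p : feas p -> load < 1.
Proof.
move=> fp; have [pd _] := fp.
exact: (load_interference_bound (interference_ge0 pd) sigma2_gt0
  (feasible_load_interference fp)).1.
Qed.

Lemma opt_power_le_feasible p l x : feas p -> A l x -> opt_power l <= p x.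
Proof.
move=> fp Ax; apply: le_trans (feasible_power_lb fp Ax).
have [pd _] := fp.
have [load_lt1 le_sI] := load_interference_bound (interference_ge0 pd) sigma2_gt0
  (feasible_load_interference fp).
have -> : opt_power l = gamma l / h l * (sigma2 / (1 - load)).
  by rewrite /opt_power; field; rewrite subr_eq0 (gt_eqF load_lt1) (gt_eqF (h_gt0 l)).
by rewrite [leRHS]mulrAC ler_wpM2l // ltW ?divr_gt0.
Qed.

Lemma opt_power_gt0 l : load < 1 -> 0 < opt_power l.
Proof. by move=> load_lt1; rewrite !mulr_gt0 ?invr_gt0 ?subr_gt0. Qed.

Section OptimalDensity.
Variable pstar : T -> R.
Hypotheses (load_lt1 : load < 1)
  (pstarE : forall l x, A l x -> pstar x = opt_power l).

Let sub1_load_neq0 : 1 - load != 0.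
Proof. by rewrite subr_eq0 gt_eqF. Qed.

Lemma interference_opt : interf pstar + sigma2 = sigma2 / (1 - load).
Proof.
suff -> : interf pstar = \sum_(l < L) sigma2 / (1 - load) * (m l * gamma l).
  by rewrite -mulr_sumr -/load; field.
apply: eq_bigr => l _.
rewrite (@eq_Rintegral _ _ _ mu _ (cst (opt_power l))); last first.
  by move=> x /set_mem Ax; rewrite (pstarE Ax).
by rewrite Rintegral_cst_class /opt_power; field; rewrite sub1_load_neq0 gt_eqF.
Qed.

Lemma feasible_opt : feas pstar.
Proof.
split; first split.
- apply: measurable_fun_mobiles => l.
  apply: (eq_measurable_fun (cst (opt_power l))); last exact: measurable_cst.
  by move=> x /set_mem Ax; rewrite (pstarE Ax).
- by move=> x /mobilesP[l Ax]; rewrite (pstarE Ax) opt_power_gt0.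
- move=> l; apply: eq_integrable (mA l) _ _ _ (integrable_cst_class l (opt_power l)).
  by move=> x /set_mem Ax; rewrite /= (pstarE Ax).
- move=> l x Ax; rewrite /sinr interference_opt (pstarE Ax) /opt_power.
  rewrite [leRHS](_ : _ = gamma l) //; field.
  by rewrite sub1_load_neq0 (gt_eqF sigma2_gt0) (gt_eqF (h_gt0 l)).
Qed.

End OptimalDensity.

Lemma exists_classwise_cst (c : 'I_L -> R) :
  (forall l l', l != l' -> A l `&` A l' = set0) ->
  exists p : T -> R, forall l x, A l x -> p x = c l.
Proof.
move=> disjA; exists (fun x => \sum_(l < L) if `[< A l x >] then c l else 0).
move=> l x Ax; rewrite (bigD1 l) //= asboolT // big1 ?addr0 // => l' neq_l'l.
case: asboolP => // Al'x.
by have : (A l' `&` A l) x by []; rewrite disjA.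
Qed.

Lemma least_feasible_pareto pstar : feas pstar ->
  (forall p x, feas p -> mobiles A x -> pstar x <= p x) ->
  pareto_efficient mu A h gamma sigma2 pstar /\
  (forall p, pareto_efficient mu A h gamma sigma2 p ->
     {ae mu, forall x, mobiles A x -> p x = pstar x}).
Proof.
move=> f_pstar least; split.
  split=> // -[q [fq _]]; rewrite (_ : [set x | _ /\ _] = set0) ?measure0 ?ltxx //.
  by apply/seteqP; split=> x // -[Mx]; rewrite ltNge least.
move=> p [fp not_improvable].
have [[m_pstar _ _] _] := f_pstar; have [[mp _ _] _] := fp.
set N := mobiles A `&` (fun x => pstar x < p x) @^-1` [set true].
have mN : measurable N by apply: measurable_fun_ltr => //; exact: measurable_mobiles.
have N0 : mu N = 0%E.
  apply/eqP; rewrite eq_le measure_ge0 andbT leNgt; apply/negP => N_gt0.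
  by apply: not_improvable; exists pstar; split=> // x Mx; exact: least.
exists N; split=> // x /= neq_px; apply: contrapT => notNx; apply: neq_px => Mx.
apply/eqP; rewrite eq_le least // andbT leNgt.
by apply/negP => lt_px; apply: notNx.
Qed.

End PowerControl.

Theorem proposition7 (d : measure_display) (T : measurableType d) (R : realType)
  (mu : {measure set T -> \bar R}) (L : nat)
  (A : 'I_L -> set T) (m h gamma : 'I_L -> R) (sigma2 : R)
  (hA : forall l, measurable (A l))
  (hdisj : forall l l', l != l' -> A l `&` A l' = set0)
  (hm : forall l, mu (A l) = (m l)%:E)
  (hh : forall l, 0 < h l) (hgamma : forall l, 0 < gamma l)
  (hsigma : 0 < sigma2) :
  (subproblem_feasible mu A h gamma sigma2 <-> \sum_(l < L) m l * gamma l < 1) /\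
  (\sum_(l < L) m l * gamma l < 1 ->
   forall pstar : T -> R,
     (forall l x, A l x ->
        pstar x = sigma2 / h l * (gamma l / (1 - \sum_(l' < L) m l' * gamma l'))) ->
     pareto_efficient mu A h gamma sigma2 pstar /\
     (forall p, pareto_efficient mu A h gamma sigma2 p ->
        {ae mu, forall x, mobiles A x -> p x = pstar x})).
Proof.
split.
  split=> [[p fp]|load_lt1]; first exact: (feasible_load_lt1 hA hm hh hsigma fp).
  have [pstar pstarE] := exists_classwise_cst (opt_power m h gamma sigma2) hdisj.
  by exists pstar; exact: (feasible_opt hA hm hh hgamma hsigma load_lt1 pstarE).
move=> load_lt1 pstar pstarE.
apply: (least_feasible_pareto hA (feasible_opt hA hm hh hgamma hsigma load_lt1 pstarE)).
move=> p x fp /mobilesP[l Ax]; rewrite (pstarE l x Ax).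
exact: (opt_power_le_feasible hA hm hh hgamma hsigma fp Ax).
Qed.
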